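(* If the Block MDP $\Phi$ is $\gamma$-separable (for some $\gamma>0$ and some full-support distribution $\nu$ on $\mathcal S\times\mathcal A$), then $I(\Phi)>0$, i.e. $I(x;\Phi)>0$ for every context $x\in\mathcal X$.
   Context: Block MDP $\Phi=(p,q,f)$: finite $\mathcal S$, $\mathcal X$ ($|\mathcal X|=n$), $\mathcal A$, horizon $H\ge2$, initial distribution $\mu$, latent transitions $p(s'|s,a)$ (positive), decoding $f$, emissions $q(\cdot|s)$ supported on $f^{-1}(s)$, behavior policy $\pi$. For $\nu\in\mathcal P(\mathcal S\times\mathcal A)$ with full support define $b_\nu(s,a|s')=\frac{p(s'|s,a)\nu(s,a)}{\sum_{\tilde s,\tilde a}p(s'|\tilde s,\tilde a)\nu(\tilde s,\tilde a)}$ and $\mathbf b_\nu(s')=(b_\nu(s,a|s'))_{(s,a)}$. $\Phi$ is $\gamma$-separable if $\|\mathbf b_\nu(s')-\mathbf b_\nu(s'')\|_1\ge\gamma$ for all $s'\ne s''$. Rate function: for $x$, $i=f(x)$, $j\ne i$, $c>0$, $\Psi_j=(p,\tilde q,g)$ with $g(x)=j$, $g=f$ elsewhere, $\tilde q(x|j)=c\,q(x|i)$, $\tilde q(y|j)=(1-c\,q(x|i))q(y|j)$ on $f^{-1}(j)$, $\tilde q(y|i)=q(y|i)/(1-q(x|i))$ on $f^{-1}(i)\setminus\{x\}$, $\tilde q=q$ otherwise; $m(s,a)=\frac1{H-1}\sum_{h<H}\mathbb P_{\Psi_j}[g(x_h)=s,a_h=a]$ under $\pi$; $I_j(x;c,\Phi)=n\sum_{a,s}\{c\,q(x|i)p(j|s,a)m(s,a)\log\frac{c\,p(j|s,a)}{p(i|s,a)}+c\,q(x|i)m(j,a)p(s|j,a)\log\frac{p(s|j,a)}{p(s|i,a)}+(1-c\,q(x|i)p(j|s,a))m(s,a)\log\frac{1-c\,q(x|i)p(j|s,a)}{1-q(x|i)p(i|s,a)}\}$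 ($+\infty$ if invalid); $I(x;\Phi)=\min_{j\ne f(x)}\inf_{c>0}I_j(x;c,\Phi)$. The condition $I(\Phi)>0$ means $I(x;\Phi)>0$ for all $x$. *)

From HB Require Import structures.
From mathcomp Require Import all_boot all_order all_algebra.
From mathcomp Require Import all_classical all_reals all_analysis.
Set Implicit Arguments. Unset Strict Implicit. Unset Printing Implicit Defensive.
Import Order.TTheory GRing.Theory Num.Theory.
Local Open Scope ring_scope.

Section BlockMDP.
Variables (R : realType) (S A X : finType).

Definition is_dist (T : finType) (d : T -> R) :=
  (forall t, 0 <= d t) /\ \sum_t d t = 1.

(* Block MDP Phi = (p,q,f) with initial distribution mu (on latent states)
   and behavior policy pi(a|x) (on contexts).
   p s a s' = p(s'|s,a);  q s y = q(y|s);  pi y a = pi(a|y). *)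
Definition block_mdp (mu : S -> R) (p : S -> A -> S -> R) (q : S -> X -> R)
    (f : X -> S) (pi : X -> A -> R) :=
  is_dist mu /\
  (forall s a, is_dist (p s a)) /\
  (forall s a s', 0 < p s a s') /\
  (forall s, is_dist (q s)) /\
  (forall s y, f y != s -> q s y = 0) /\
  (forall y, is_dist (pi y)).

Definition bnu (p : S -> A -> S -> R) (nu : S -> A -> R) (s' : S) (s : S) (a : A) : R :=
  p s a s' * nu s a / \sum_(t : S) \sum_(b : A) p t b s' * nu t b.

Definition separable (p : S -> A -> S -> R) (nu : S -> A -> R) (gamma : R) :=
  forall s' s'' : S, s' != s'' ->
    gamma <= \sum_(s : S) \sum_(a : A) `| bnu p nu s' s a - bnu p nu s'' s a |.

Definition full_support_dist (nu : S -> A -> R) :=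
  (forall s a, 0 < nu s a) /\ \sum_(s : S) \sum_(a : A) nu s a = 1.

Definition qtilde (q : S -> X -> R) (f : X -> S) (x : X) (j : S) (c : R)
    (s : S) (y : X) : R :=
  let i := f x in
  if s == j then
    (if y == x then c * q i x
     else if f y == j then (1 - c * q i x) * q j y else q s y)
  else if s == i then
    (if y == x then 0
     else if f y == i then q i y / (1 - q i x) else q s y)
  else q s y.

Definition gdec (f : X -> S) (x : X) (j : S) (y : X) : S :=
  if y == x then j else f y.

(* Joint law of (s_h, x_h) of a block MDP (mu, p, qq, pi); step h is
   indexed from 0 (i.e. [marg k] is the law at time h = k+1). *)
Fixpoint marg (mu : S -> R) (p : S -> A -> S -> R) (qq : S -> X -> R)
    (pi : X -> A -> R) (k : nat) : S -> X -> R :=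
  match k with
  | 0 => fun s y => mu s * qq s y
  | k'.+1 => fun s' y' =>
      \sum_(s : S) \sum_(y : X) \sum_(a : A)
        marg mu p qq pi k' s y * pi y a * p s a s' * qq s' y'
  end.

Definition prob_dec_act (mu : S -> R) (p : S -> A -> S -> R) (qq : S -> X -> R)
    (g : X -> S) (pi : X -> A -> R) (k : nat) (s : S) (a : A) : R :=
  \sum_(s0 : S) \sum_(y : X | g y == s) marg mu p qq pi k s0 y * pi y a.

Definition mvisit (H : nat) (mu : S -> R) (p : S -> A -> S -> R)
    (qq : S -> X -> R) (g : X -> S) (pi : X -> A -> R) (s : S) (a : A) : R :=
  (H.-1)%:R^-1 * \sum_(k < H.-1) prob_dec_act mu p qq g pi k s a.

Local Open Scope ereal_scope.

(* I_j(x; c, Phi), +oo when Psi_j is not a valid model (c q(x|i) > 1) *)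
Definition Irate_j (H : nat) (mu : S -> R) (p : S -> A -> S -> R)
    (q : S -> X -> R) (f : X -> S) (pi : X -> A -> R) (x : X) (j : S) (c : R)
    : \bar R :=
  let i := f x in
  let qx := q i x in
  let m := mvisit H mu p (qtilde q f x j c) (gdec f x j) pi in
  if (c * qx <= 1)%R then
    ((#|X|)%:R * \sum_(a : A) \sum_(s : S)
       (c * qx * p s a j * m s a * ln (c * p s a j / p s a i)
        + c * qx * m j a * p j a s * ln (p j a s / p i a s)
        + (1 - c * qx * p s a j) * m s a
            * ln ((1 - c * qx * p s a j) / (1 - qx * p s a i))))%R%:E
  else +oo.

Definition Irate (H : nat) (mu : S -> R) (p : S -> A -> S -> R)
    (q : S -> X -> R) (f : X -> S) (pi : X -> A -> R) (x : X) : \bar R :=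
  \big[Order.min/+oo]_(j : S | j != f x)
     ereal_inf [set Irate_j H mu p q f pi x j c | c in [set c : R | (0 < c)%R]].

End BlockMDP.

From HB Require Import structures.
From mathcomp Require Import all_boot all_order all_algebra.
From mathcomp Require Import all_classical all_reals all_analysis.
From mathcomp Require Import ring lra.
Set Implicit Arguments. Unset Strict Implicit. Unset Printing Implicit Defensive.
Import Order.TTheory GRing.Theory Num.Theory.
Local Open Scope ring_scope.

(* Each summand of I_j(x; c) is a Kullback-Leibler divergence between two
   emission/transition laws, and a KL divergence dominates the squared Hellinger
   distance.  The visit frequencies m(s, a), s <> f x, are bounded below
   uniformly in c (already by the first step), so I_j(x; c) >= K G(sqrt c) with
   K > 0 and G a nonnegative quadratic polynomial.  Either G is bounded away from
   0, or it has a root u > 0; a root forces p(f x|s,a) = u^2 p(j|s,a) for all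
   (s, a), hence b_nu(f x) = b_nu(j), which separability forbids. *)

Section Inequalities.
Variable R : realType.

Lemma ln_le_subr1 (t : R) : 0 < t -> ln t <= t - 1.
Proof.
by move=> t_gt0; have := @le_ln1Dx R (t - 1); rewrite addrCA subrr addr0; apply; lra.
Qed.

(* Pointwise form of KL >= squared Hellinger: put t = sqrt (Q / P) in ln t <= t - 1. *)
Lemma sqrt_mul_le_xlnx (P Q : R) : 0 <= P -> 0 < Q ->
  2 * P - 2 * (Num.sqrt P * Num.sqrt Q) <= P * ln (P / Q).
Proof.
move=> P_ge0 Q_gt0; have [->|P_neq0] := eqVneq P 0.
  by rewrite sqrtr0 !mul0r mulr0 subrr.
have P_gt0 : 0 < P by rewrite lt0r P_neq0.
have sP_gt0 : 0 < Num.sqrt P by rewrite sqrtr_gt0.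
have sQ_gt0 : 0 < Num.sqrt Q by rewrite sqrtr_gt0.
set t := Num.sqrt Q / Num.sqrt P.
have t_gt0 : 0 < t by rewrite divr_gt0.
have lnPQ : ln (P / Q) = - (ln t *+ 2).
  have -> : P / Q = (t ^+ 2)^-1.
    by rewrite /t expr_div_n !sqr_sqrtr ?ltW // invf_div.
  by rewrite lnV ?posrE ?exprn_gt0 // lnXn.
have Pt : P * t = Num.sqrt P * Num.sqrt Q.
  by rewrite /t -{1}(sqr_sqrtr (ltW P_gt0)); field; rewrite gt_eqF.
have : P * (ln t *+ 2) <= P * ((t - 1) *+ 2).
  by rewrite ler_pM2l // lerMn2r ln_le_subr1.
rewrite lnPQ -Pt mulrN !mulrnAr; lra.
Qed.

Lemma hellinger_le_kl (T : finType) (P Q : T -> R) :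
  (forall t, 0 <= P t) -> (forall t, 0 < Q t) ->
  \sum_t P t = 1 -> \sum_t Q t = 1 ->
  \sum_t (Num.sqrt (P t) - Num.sqrt (Q t)) ^+ 2 <= \sum_t P t * ln (P t / Q t).
Proof.
move=> P_ge0 Q_gt0 P_sum1 Q_sum1.
have -> : \sum_t (Num.sqrt (P t) - Num.sqrt (Q t)) ^+ 2 =
    \sum_t (2 * P t - 2 * (Num.sqrt (P t) * Num.sqrt (Q t))) + (\sum_t Q t - \sum_t P t).
  rewrite -sumrB -big_split /=; apply: eq_bigr => t _.
  rewrite sqrrB (sqr_sqrtr (P_ge0 t)) (sqr_sqrtr (ltW (Q_gt0 t))); ring.
rewrite P_sum1 Q_sum1 subrr addr0; apply: ler_sum => t _; exact: sqrt_mul_le_xlnx.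
Qed.

Lemma hellinger_le_bernoulli_kl (al be : R) : 0 <= al <= 1 -> 0 < be < 1 ->
  (Num.sqrt al - Num.sqrt be) ^+ 2 <=
  al * ln (al / be) + (1 - al) * ln ((1 - al) / (1 - be)).
Proof.
case/andP=> al_ge0 al_le1 /andP[be_gt0 be_lt1].
have h1 := sqrt_mul_le_xlnx al_ge0 be_gt0.
have h2 := @sqrt_mul_le_xlnx (1 - al) (1 - be) ltac:(lra) ltac:(lra).
have s1 := sqr_sqrtr al_ge0; have s2 := sqr_sqrtr (ltW be_gt0).
have s3 : Num.sqrt (1 - al) ^+ 2 = 1 - al by rewrite sqr_sqrtr //; lra.
have s4 : Num.sqrt (1 - be) ^+ 2 = 1 - be by rewrite sqr_sqrtr //; lra.
have := sqr_ge0 (Num.sqrt (1 - al) - Num.sqrt (1 - be)).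
move: s1 s2 s3 s4 h1 h2; rewrite !expr2; nra.
Qed.

Lemma scaled_hellinger_le_bernoulli_kl (c qx pj pi : R) :
  0 < c -> 0 < qx <= 1 -> c * qx <= 1 -> 0 < pj <= 1 -> 0 < pi < 1 ->
  qx * (Num.sqrt c * Num.sqrt pj - Num.sqrt pi) ^+ 2 <=
  c * qx * pj * ln (c * pj / pi)
  + (1 - c * qx * pj) * ln ((1 - c * qx * pj) / (1 - qx * pi)).
Proof.
move=> c_gt0 /andP[qx_gt0 qx_le1] cqx_le1 /andP[pj_gt0 pj_le1] /andP[pi_gt0 pi_lt1].
have cqx_ge0 : 0 <= c * qx by rewrite mulr_ge0 ?ltW.
have al_bounds : 0 <= c * qx * pj <= 1.
  have : c * qx * pj <= c * qx * 1 by apply: ler_wpM2l.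
  have : 0 <= c * qx * pj by rewrite mulr_ge0 // ltW.
  rewrite mulr1; lra.
have be_bounds : 0 < qx * pi < 1.
  have : qx * pi <= 1 * pi by apply: ler_wpM2r => //; exact: ltW.
  have := mulr_gt0 qx_gt0 pi_gt0.
  rewrite mul1r; lra.
have := hellinger_le_bernoulli_kl al_bounds be_bounds.
have -> : c * qx * pj / (qx * pi) = c * pj / pi by field; rewrite !gt_eqF.
suff -> : (Num.sqrt (c * qx * pj) - Num.sqrt (qx * pi)) ^+ 2 =
          qx * (Num.sqrt c * Num.sqrt pj - Num.sqrt pi) ^+ 2 by [].
rewrite !sqrtrM ?mulr_ge0 ?ltW // -[X in _ = X * _](sqr_sqrtr (ltW qx_gt0)); ring.
Qed.

Lemma positive_lb_finType (T : finType) (h : T -> R) :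
  (forall t, 0 < h t) -> exists2 e : R, 0 < e & forall t, e <= h t.
Proof.
move=> h_gt0; exists (\big[Num.min/1]_t h t).
  by apply: (big_ind (fun v => 0 < v)) => // u v u_gt0 v_gt0; rewrite lt_min u_gt0.
by move=> t; rewrite (bigD1 t) //= ge_min lexx.
Qed.

(* The two cases are the two signs of the discriminant of the quadratic in u. *)
Lemma sumsq_affine_dichotomy (T : finType) (P : pred T) (al be : T -> R) (E : R) (t0 : T) :
  P t0 -> 0 <= E -> (forall t, P t -> 0 < al t) -> (forall t, P t -> 0 < be t) ->
  (exists2 d : R, 0 < d &
     forall u : R, d <= \sum_(t | P t) (u * al t - be t) ^+ 2 + u ^+ 2 * E)
  \/ (exists2 u0 : R, 0 < u0 & (forall t, P t -> u0 * al t = be t) /\ E = 0).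
Proof.
move=> Pt0 E_ge0 al_gt0 be_gt0.
set F := fun u : R => \sum_(t | P t) (u * al t - be t) ^+ 2.
set cA := \sum_(t | P t) al t ^+ 2 + E.
set cB := \sum_(t | P t) al t * be t.
set cC := \sum_(t | P t) be t ^+ 2.
have F_ge0 u : 0 <= F u by apply: sumr_ge0 => t _; exact: sqr_ge0.
have F_quad u : F u + u ^+ 2 * E = cA * u ^+ 2 - 2 * cB * u + cC.
  have -> : F u = \sum_(t | P t) al t ^+ 2 * u ^+ 2
      - \sum_(t | P t) 2 * (al t * be t) * u + cC.
    rewrite -sumrB -big_split /=; apply: eq_bigr => t _; ring.
  rewrite /cA /cB mulrDl mulr_suml mulr_sumr mulr_suml; ring.
have sum_gt0 (g : T -> R) : (forall t, P t -> 0 < g t) -> 0 < \sum_(t | P t) g t.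
  move=> g_gt0; rewrite (bigD1 t0) //=.
  have : 0 <= \sum_(t | P t && (t != t0)) g t.
    by apply: sumr_ge0 => t /andP[Pt _]; exact: ltW (g_gt0 t Pt).
  have := g_gt0 t0 Pt0; lra.
have cA_gt0 : 0 < cA.
  have := sum_gt0 _ (fun t Pt => exprn_gt0 2 (al_gt0 t Pt)); rewrite /cA; lra.
have cB_gt0 : 0 < cB by apply: sum_gt0 => t Pt; rewrite mulr_gt0 ?al_gt0 ?be_gt0.
have [disc_gt0|disc_le0] := ltP 0 (cA * cC - cB ^+ 2).
  left; exists ((cA * cC - cB ^+ 2) / cA); first by rewrite divr_gt0.
  move=> u; rewrite -/(F u) F_quad ler_pdivrMr //.
  have := sqr_ge0 (cA * u - cB); nra.
right; exists (cB / cA); first by rewrite divr_gt0.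
have F_root : F (cB / cA) + (cB / cA) ^+ 2 * E <= 0.
  rewrite F_quad.
  have -> : cA * (cB / cA) ^+ 2 - 2 * cB * (cB / cA) + cC = (cA * cC - cB ^+ 2) / cA.
    by field; rewrite gt_eqF.
  by rewrite pmulr_lle0 // invr_gt0.
have E_term_ge0 : 0 <= (cB / cA) ^+ 2 * E by rewrite mulr_ge0 ?sqr_ge0.
have := F_ge0 (cB / cA); split.
  have F0 : F (cB / cA) = 0 by lra.
  move=> t Pt; apply/eqP; rewrite -subr_eq0 -sqrf_eq0; apply/eqP.
  by apply: (psumr_eq0P _ F0) => // s _; exact: sqr_ge0.
have : (cB / cA) ^+ 2 * E = 0 by lra.
by move/eqP; rewrite mulf_eq0 sqrf_eq0 (gt_eqF (divr_gt0 cB_gt0 cA_gt0)) => /eqP.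
Qed.

End Inequalities.

Section Kernel.
Variables (R : realType) (S A : finType) (p : S -> A -> S -> R).
Hypothesis p_gt0 : forall s a t, 0 < p s a t.
Hypothesis p_sum1 : forall s a, \sum_t p s a t = 1.

Definition row_hellinger (i j : S) : R :=
  \sum_a \sum_s (Num.sqrt (p j a s) - Num.sqrt (p i a s)) ^+ 2.

(* [sqrt_gap i j (Num.sqrt c)] vanishes exactly when p(i|s,a) = c p(j|s,a) for
   all s <> i and the rows p(.|j,a) and p(.|i,a) coincide. *)
Definition sqrt_gap (i j : S) (u : R) : R :=
  \sum_a \sum_(s | s != i) (u * Num.sqrt (p s a j) - Num.sqrt (p s a i)) ^+ 2
  + u ^+ 2 * row_hellinger i j.

Lemma kernel_lt1 s a t t' : t != t' -> p s a t < 1.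
Proof.
move=> tNt'; have := p_sum1 s a; rewrite (bigD1 t) //= (bigD1 t') 1?eq_sym //=.
have : 0 <= \sum_(k | (k != t) && (k != t')) p s a k.
  by apply: sumr_ge0 => k _; exact: ltW.
have := p_gt0 s a t'; lra.
Qed.

Lemma rate_sum_ge (i j : S) (qx c m0 : R) (m : S -> A -> R) :
  j != i -> 0 < qx <= 1 -> 0 < c -> c * qx <= 1 -> 0 <= m0 ->
  (forall s a, 0 <= m s a) -> (forall s a, s != i -> m0 <= m s a) ->
  m0 * qx * sqrt_gap i j (Num.sqrt c) <=
  \sum_a \sum_s
    (c * qx * p s a j * m s a * ln (c * p s a j / p s a i)
     + c * qx * m j a * p j a s * ln (p j a s / p i a s)
     + (1 - c * qx * p s a j) * m s a
         * ln ((1 - c * qx * p s a j) / (1 - qx * p s a i))).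
Proof.
move=> jNi qx_bounds c_gt0 cqx_le1 m0_ge0 m_ge0 m_ge.
have /andP[qx_gt0 _] := qx_bounds.
have iNj : i != j by rewrite eq_sym.
have cqx_ge0 : 0 <= c * qx by rewrite mulr_ge0 ?ltW.
have qx_sqr_ge0 (u : R) : 0 <= qx * u ^+ 2 by rewrite mulr_ge0 ?sqr_ge0 ?ltW.
have -> : m0 * qx * sqrt_gap i j (Num.sqrt c) =
    \sum_a (\sum_(s | s != i) m0 * (qx * (Num.sqrt c * Num.sqrt (p s a j)
                                         - Num.sqrt (p s a i)) ^+ 2)
            + c * qx * m0 * \sum_s (Num.sqrt (p j a s) - Num.sqrt (p i a s)) ^+ 2).
  rewrite /sqrt_gap /row_hellinger sqr_sqrtr ?(ltW c_gt0) // mulrDr big_split /=.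
  congr (_ + _); last by rewrite -mulr_sumr; ring.
  by rewrite mulr_sumr; apply: eq_bigr => a _; rewrite mulr_sumr; apply: eq_bigr => s _; ring.
apply: ler_sum => a _; under [X in _ <= X]eq_bigr => s _ do rewrite addrAC.
rewrite big_split /=; apply: lerD.
  (* m(i, a) has no lower bound, so the summands s = i are only used as >= 0. *)
  rewrite big_mkcond /=; apply: ler_sum => s _.
  have bern := scaled_hellinger_le_bernoulli_kl c_gt0 qx_bounds cqx_le1
    (introT andP (conj (p_gt0 s a j) (ltW (kernel_lt1 s a jNi))))
    (introT andP (conj (p_gt0 s a i) (kernel_lt1 s a iNj))).
  rewrite (mulrAC _ (m s a)) (mulrAC _ (m s a)) -mulrDl [X in _ <= X]mulrC.
  apply: (le_trans _ (ler_wpM2l (m_ge0 s a) bern)); case: ifP => [sNi|_].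
    by rewrite ler_wpM2r ?m_ge.
  by rewrite mulr_ge0.
under [X in _ <= X]eq_bigr => s _ do rewrite -mulrA.
rewrite -mulr_sumr; apply: ler_pM.
- by rewrite mulr_ge0.
- by apply: sumr_ge0 => s _; exact: sqr_ge0.
- by rewrite ler_wpM2l // m_ge.
apply: hellinger_le_kl => // s; exact: ltW.
Qed.

Lemma sqrt_gap_lb_or_proportional (a0 : A) (i j : S) : j != i ->
  (exists2 d : R, 0 < d & forall u, d <= sqrt_gap i j u)
  \/ (exists2 k : R, 0 < k & forall s a, p s a i = k * p s a j).
Proof.
move=> jNi.
have row_hellinger_ge0 : 0 <= row_hellinger i j.
  by apply: sumr_ge0 => a _; apply: sumr_ge0 => s _; exact: sqr_ge0.
have sqrt_p_gt0 t s a : 0 < Num.sqrt (p s a t) by rewrite sqrtr_gt0.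
have [[d d_gt0 le_d]|[u0 u0_gt0 [root rows0]]] :=
  @sumsq_affine_dichotomy R _ (fun t : A * S => t.2 != i)
    (fun t => Num.sqrt (p t.2 t.1 j)) (fun t => Num.sqrt (p t.2 t.1 i)) _ (a0, j)
    jNi row_hellinger_ge0 (fun t _ => sqrt_p_gt0 _ _ _) (fun t _ => sqrt_p_gt0 _ _ _).
  by left; exists d => // u; rewrite /sqrt_gap pair_big_dep /=.
right; exists (u0 ^+ 2); first exact: exprn_gt0.
have rows_eq a s : p j a s = p i a s.
  rewrite /row_hellinger pair_bigA /= in rows0.
  have := psumr_eq0P (fun t _ => sqr_ge0 _) rows0 (i := (a, s)) isT.
  by move/eqP; rewrite sqrf_eq0 subr_eq0 eqr_sqrt ?ltW // => /eqP.
have off_diag s a : s != i -> p s a i = u0 ^+ 2 * p s a j.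
  move=> sNi; have := root (a, s) sNi => /= /(congr1 (fun v => v ^+ 2)).
  by rewrite exprMn !sqr_sqrtr ?ltW.
move=> s a; have [->|sNi] := eqVneq s i; last exact: off_diag.
by rewrite -rows_eq off_diag // rows_eq.
Qed.

End Kernel.

Lemma separable_not_proportional (R : realType) (S A : finType)
    (p : S -> A -> S -> R) (nu : S -> A -> R) (gamma k : R) (i j : S) :
  separable p nu gamma -> 0 < gamma -> k != 0 -> i != j ->
  ~ (forall s a, p s a i = k * p s a j).
Proof.
move=> sep gamma_gt0 k_neq0 iNj prop.
have bnu_eq s a : bnu p nu i s a = bnu p nu j s a.
  rewrite /bnu prop.
  have -> : \sum_t \sum_b p t b i * nu t b = k * \sum_t \sum_b p t b j * nu t b.
    rewrite mulr_sumr; apply: eq_bigr => t _; rewrite mulr_sumr.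
    by apply: eq_bigr => b _; rewrite prop mulrA.
  by rewrite -[k * _ * _]mulrA -mulf_div divff // mul1r.
have := sep i j iNj.
under eq_bigr => s _ do under eq_bigr => a _ do rewrite bnu_eq subrr normr0.
rewrite big1 => [|s _]; last by rewrite big1.
lra.
Qed.

Section Visits.
Variables (R : realType) (S A X : finType).
Variables (mu : S -> R) (p : S -> A -> S -> R) (qq : S -> X -> R) (pi : X -> A -> R).
Hypothesis mu_ge0 : forall s, 0 <= mu s.
Hypothesis p_ge0 : forall s a t, 0 <= p s a t.
Hypothesis qq_ge0 : forall s y, 0 <= qq s y.
Hypothesis pi_ge0 : forall y a, 0 <= pi y a.

Lemma marg_ge0 k s y : 0 <= marg mu p qq pi k s y.
Proof.
elim: k s y => [|k IHk] s y /=; first exact: mulr_ge0.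
apply: sumr_ge0 => s0 _; apply: sumr_ge0 => y0 _; apply: sumr_ge0 => a _.
by rewrite !mulr_ge0.
Qed.

Lemma prob_dec_act_ge0 (g : X -> S) k s a : 0 <= prob_dec_act mu p qq g pi k s a.
Proof.
by apply: sumr_ge0 => s0 _; apply: sumr_ge0 => y _; rewrite mulr_ge0 ?marg_ge0.
Qed.

Lemma mvisit_ge0 H (g : X -> S) s a : 0 <= mvisit H mu p qq g pi s a.
Proof.
by rewrite mulr_ge0 ?invr_ge0 // sumr_ge0 // => k _; exact: prob_dec_act_ge0.
Qed.

Lemma mvisit_ge H (g : X -> S) (e : R) s a : (2 <= H)%N ->
  (forall y, e <= mu s * pi y a) -> \sum_(y | g y == s) qq s y = 1 ->
  (H.-1)%:R^-1 * e <= mvisit H mu p qq g pi s a.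
Proof.
case: H => [|[|H]] // _ le_e mass1; rewrite /mvisit /=.
rewrite ler_wpM2l ?invr_ge0 // big_ord_recl.
have : 0 <= \sum_(k < H) prob_dec_act mu p qq g pi (bump 0 k) s a.
  by apply: sumr_ge0 => k _; exact: prob_dec_act_ge0.
suff : e <= prob_dec_act mu p qq g pi 0 s a by lra.
rewrite /prob_dec_act (bigD1 s) //=.
have : 0 <= \sum_(s0 | s0 != s) \sum_(y | g y == s) mu s0 * qq s0 y * pi y a.
  by apply: sumr_ge0 => s0 _; apply: sumr_ge0 => y _; rewrite !mulr_ge0.
suff : e <= \sum_(y | g y == s) mu s * qq s y * pi y a by lra.
rewrite -[e]mulr1 -mass1 mulr_sumr; apply: ler_sum => y _.
by rewrite [X in _ <= X]mulrAC ler_wpM2r.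
Qed.

End Visits.

Section AlternativeEmission.
Variables (R : realType) (S X : finType) (q : S -> X -> R) (f : X -> S).
Hypothesis q_ge0 : forall s y, 0 <= q s y.
Hypothesis q_sum1 : forall s, \sum_y q s y = 1.
Hypothesis q_supp : forall s y, f y != s -> q s y = 0.

Lemma emission_le1 s y : q s y <= 1.
Proof.
rewrite -(q_sum1 s) (bigD1 y) //= lerDl.
by apply: sumr_ge0 => z _; exact: q_ge0.
Qed.

Lemma qtilde_ge0 x j c s y : 0 <= c -> c * q (f x) x <= 1 ->
  0 <= qtilde q f x j c s y.
Proof.
move=> c_ge0 cqx_le1; have qx_le1 := emission_le1 (f x) x.
rewrite /qtilde; case: ifP => _.
  case: ifP => _; first by rewrite mulr_ge0.
  by case: ifP => _; rewrite ?mulr_ge0 ?subr_ge0.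
case: ifP => _ //; case: ifP => _ //; case: ifP => _ //.
by rewrite divr_ge0 ?subr_ge0.
Qed.

Lemma qtilde_mass x j c s : j != f x -> s != f x ->
  \sum_(y | gdec f x j y == s) qtilde q f x j c s y = 1.
Proof.
move=> jNi sNi; rewrite big_mkcond /=.
have [->|sNj] := eqVneq s j.
  rewrite (bigD1 x) //= /gdec /qtilde !eqxx /=.
  rewrite (eq_bigr (fun y => (1 - c * q (f x) x) * q j y)); last first.
    move=> y yNx; rewrite (negbTE yNx).
    by case: (eqVneq (f y) j) => // fyNj; rewrite (q_supp fyNj) mulr0.
  have : \sum_(y | y != x) q j y = 1.
    by rewrite -(q_sum1 j) [RHS](bigD1 x) //= q_supp ?add0r // eq_sym.
  by rewrite -mulr_sumr => ->; ring.
rewrite -(q_sum1 s); apply: eq_bigr => y _.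
rewrite /gdec /qtilde (negbTE sNj) (negbTE sNi).
have [->|yNx] := eqVneq y x; first by rewrite eq_sym (negbTE sNj) q_supp // eq_sym.
by case: (eqVneq (f y) s) => // fyNs; rewrite q_supp.
Qed.

End AlternativeEmission.

Section Rate.
Variables (R : realType) (S A X : finType) (H : nat).
Variables (mu : S -> R) (p : S -> A -> S -> R) (q : S -> X -> R) (f : X -> S).
Variable (pi : X -> A -> R).

Lemma Irate_gt0_of_uniform_lb x :
  (forall j, j != f x -> exists2 eps : R, 0 < eps &
     forall c, 0 < c -> (eps%:E <= Irate_j H mu p q f pi x j c)%E) ->
  (0 < Irate H mu p q f pi x)%E.
Proof.
move=> lb; rewrite /Irate; apply: (big_ind (fun v => 0 < v)%E) => //.
  by move=> u v u_gt0 v_gt0; rewrite lt_min u_gt0.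
move=> j jNi; have [eps eps_gt0 le_eps] := lb j jNi.
apply: (@lt_le_trans _ _ eps%:E); first by rewrite lte_fin.
by apply/ereal_infP => _ [c c_gt0 <-]; exact: le_eps.
Qed.

Hypothesis H_ge2 : (2 <= H)%N.
Hypothesis Phi : block_mdp mu p q f pi.

Lemma Irate_j_ge x (e : R) :
  0 < q (f x) x -> 0 <= e -> (forall s y a, e <= mu s * pi y a) ->
  forall j c, j != f x -> 0 < c ->
  ((#|X|%:R * ((H.-1)%:R^-1 * e * q (f x) x * sqrt_gap p (f x) j (Num.sqrt c)))%:E
     <= Irate_j H mu p q f pi x j c)%E.
Proof.
move=> qx_gt0 e_ge0 le_e j c jNi c_gt0; rewrite /Irate_j /=.
case: ifP => [cqx_le1|_]; last by rewrite leey.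
have [[mu_ge0 _] [p_dist [p_gt0 [q_dist [q_supp pi_dist]]]]] := Phi.
have p_ge0 s a t : 0 <= p s a t by exact: ltW.
have q_ge0 s y : 0 <= q s y := (q_dist s).1 y.
have q_sum1 s : \sum_y q s y = 1 := (q_dist s).2.
have pi_ge0 y a : 0 <= pi y a := (pi_dist y).1 a.
have qt_ge0 s y : 0 <= qtilde q f x j c s y.
  by apply: qtilde_ge0 => //; exact: ltW.
rewrite lee_fin ler_wpM2l //; apply: rate_sum_ge => //.
- by move=> s a; exact: (p_dist s a).2.
- by rewrite qx_gt0 emission_le1.
- by rewrite mulr_ge0 ?invr_ge0.
- by move=> s a; exact: mvisit_ge0.
move=> s a sNi; apply: mvisit_ge => //.
exact: qtilde_mass.
Qed.

End Rate.

Theorem proposition14 (R : realType) (S A X : finType) (H : nat)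
    (mu : S -> R) (p : S -> A -> S -> R) (q : S -> X -> R) (f : X -> S)
    (pi : X -> A -> R) :
  (2 <= H)%N ->
  block_mdp mu p q f pi ->
  (forall s, 0 < mu s) ->
  (forall y, 0 < q (f y) y) ->
  (forall y a, 0 < pi y a) ->
  (exists (gamma : R) (nu : S -> A -> R),
      0 < gamma /\ full_support_dist nu /\ separable p nu gamma) ->
  forall x : X, (0 < Irate H mu p q f pi x)%E.
Proof.
move=> H_ge2 Phi mu_gt0 qf_gt0 pi_gt0 [gamma [nu [gamma_gt0 [_ sep]]]] x.
have [_ [_ [p_gt0 [_ [_ pi_dist]]]]] := Phi.
have a0 : A.
  case: (pickP (@predT A)) => [a //|A0].
  by move: (pi_dist x).2; rewrite big_pred0 // => /eqP; rewrite eq_sym oner_eq0.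
have [e e_gt0 le_e] := positive_lb_finType
  (fun t : S * X * A => mulr_gt0 (mu_gt0 t.1.1) (pi_gt0 t.1.2 t.2)).
have K_gt0 : 0 < (H.-1)%:R^-1 * e * q (f x) x.
  by rewrite !mulr_gt0 // invr_gt0 ltr0n; case: H H_ge2 => [|[|]].
have Irate_j_ge_gap := Irate_j_ge H_ge2 Phi (qf_gt0 x) (ltW e_gt0)
  (fun s y a => le_e (s, y, a)).
set K := (H.-1)%:R^-1 * e * q (f x) x in K_gt0 Irate_j_ge_gap.
have X_gt0 : (0 < #|X|)%N by apply/card_gt0P; exists x.
apply: Irate_gt0_of_uniform_lb => j jNi.
have [[d d_gt0 le_d]|[k k_gt0 prop]] := sqrt_gap_lb_or_proportional p_gt0 a0 jNi.
  exists (#|X|%:R * (K * d)); first by rewrite mulr_gt0 ?ltr0n // mulr_gt0.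
  move=> c c_gt0; apply: le_trans (Irate_j_ge_gap _ _ jNi c_gt0).
  by rewrite lee_fin ler_wpM2l ?ler0n // ler_wpM2l // ltW.
exfalso; apply: (separable_not_proportional sep gamma_gt0 (lt0r_neq0 k_gt0) _ prop).
by rewrite eq_sym.
Qed.
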